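(* Let $X$ be a separable absolutely neighbourhood star-Hurewicz space. If $Y$ is a closed and discrete subset of $X$, then $|Y|<\mathfrak{b}$.
   Context: All spaces are regular. $St(A,\mathcal{U})=\bigcup\{U\in\mathcal{U}:U\cap A\neq\emptyset\}$. $\mathfrak{b}$ is the bounding number. $X$ is absolutely neighbourhood star-Hurewicz if for each sequence $(\mathcal{U}_n:n\in\omega)$ of open covers of $X$ and each dense subset $D$ of $X$ there is a sequence $(F_n:n\in\omega)$ of finite subsets of $D$ such that for any open sets $O_n$ with $F_n\subseteq O_n$ ($n\in\omega$), every $x\in X$ lies in $St(O_n,\mathcal{U}_n)$ for all but finitely many $n$. *)

From HB Require Import structures.
From mathcomp Require Import all_boot all_order.
From mathcomp Require Import all_classical all_reals topology.
Import Order.TTheory.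
Set Implicit Arguments. Unset Strict Implicit. Unset Printing Implicit Defensive.
Local Open Scope classical_set_scope.

Definition St {T : Type} (A : set T) (U : set (set T)) : set T :=
  \bigcup_(V in [set V | U V /\ V `&` A !=set0]) V.

Definition open_cover {T : topologicalType} (U : set (set T)) : Prop :=
  (forall V, U V -> open V) /\ \bigcup_(V in U) V = setT.

Definition separable (T : topologicalType) : Prop :=
  exists D : set T, countable D /\ dense D.

Definition abs_nbhd_star_Hurewicz (T : topologicalType) : Prop :=
  forall (U : nat -> set (set T)) (D : set T),
    (forall n, open_cover (U n)) -> dense D ->
    exists F : nat -> set T,
      (forall n, finite_set (F n) /\ F n `<=` D) /\
      forall O : nat -> set T,
        (forall n, open (O n) /\ F n `<=` O n) ->
        forall x : T, \forall n \near \oo, St (O n) (U n) x.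

Definition closed_discrete {T : topologicalType} (Y : set T) : Prop :=
  closed Y /\
  forall y, Y y -> exists W : set T, open W /\ W y /\ W `&` Y = [set y].

Definition le_star (f g : nat -> nat) : Prop := \forall n \near \oo, (f n <= g n)%N.

Definition unbounded_family (F : set (nat -> nat)) : Prop :=
  ~ exists g, forall f, F f -> le_star f g.

(* |A| < b, where b = min { |F| : F unbounded in (omega^omega, <=* ) }:
   every unbounded family has cardinality strictly larger than |A|
   (equivalently, by comparability of cardinals, not <= |A|). *)
Definition card_lt_bounding {T : Type} (A : set T) : Prop :=
  forall F : set (nat -> nat), unbounded_family F -> ~ (F #<= A)%card.

From HB Require Import structures.
From mathcomp Require Import all_boot all_order.
From mathcomp Require Import all_classical all_reals topology.
Local Open Scope classical_set_scope.

(* Let F be an unbounded family with a surjection lab : Y -> F; we bound F.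
   Enumerate a countable dense set as d 0, d 1, ..., isolate each y in Y by an
   open W y meeting Y only in y, and (by regularity) give each point x an open
   neighbourhood N x whose closure meets Y at most in x.  For each n, the sets
   W y minus the closures of N (d k), k <= lab y n, d k <> y, together with
   X \ Y, form an open cover U n.  The star-Hurewicz property applied to these
   covers and the dense set yields finite sets inside {d k | k <= g n}; with
   O n the union of the N (d k), k <= g n, every y in Y lies eventually in
   St(O n, U n), which forces lab y n <= g n unless y is one of the d k.
   The function n |-> max (g n) (max_{k <= n} lab (d k) n) therefore dominates
   every member of F, a contradiction. *)

Lemma unbounded_family_nonempty {F : set (nat -> nat)} :
  unbounded_family F -> F !=set0.
Proof.
move=> unbF; apply/set0P/negP => /eqP F0; apply: unbF.
by exists id => f; rewrite F0.
Qed.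

Lemma dense_nonempty {T : topologicalType} {D : set T} (x : T) :
  dense D -> D !=set0.
Proof.
move=> dD; have [z [_ Dz]] := dD setT (ex_intro _ x I) openT.
by exists z.
Qed.

Lemma countable_enum {T : Type} {D : set T} :
  countable D -> D !=set0 -> exists d : nat -> T, range d = D.
Proof.
move=> /pfcard_geP [->|[d]]; first by move=> /set0P; rewrite eqxx.
move=> _; exists d; apply/seteqP; split.
  by move=> _ [k _ <-]; exact: funS.
by move=> x /(@surj _ _ _ _ d) [k _ <-]; exists k.
Qed.

Lemma finite_nat_bounded {A : set nat} :
  finite_set A -> exists m, forall k, A k -> (k <= m)%N.
Proof.
move=> /finite_fsetP [S ->].
exists (\max_(k <- finmap.enum_fset S) k)%N => k Sk.
exact: (@leq_bigmax_seq _ _ predT).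
Qed.

Lemma finite_range_bounded {T : Type} {d : nat -> T} {F : set T} :
  finite_set F -> F `<=` range d ->
  exists m, F `<=` d @` [set k | (k <= m)%N].
Proof.
move=> finF Fd; have /choice [idx didx] : forall x, exists k, F x -> d k = x.
  by move=> x; have [Fx|nFx] := pselect (F x);
    [have [k _ <-] := Fd x Fx; exists k | exists 0%N].
have [m idx_m] := finite_nat_bounded (finite_image idx finF).
by exists m => x Fx; exists (idx x); [apply: idx_m; exists x | exact: didx].
Qed.

Lemma le_star_bigmax (f : nat -> nat -> nat) (k : nat) :
  le_star (f k) (fun n => \max_(i < n.+1) f i n)%N.
Proof.
apply: filterS (nbhs_infty_ge k) => n kn.
have kn1 : (k < n.+1)%N by [].
exact: (@leq_bigmax_cond _ predT (fun i : 'I_n.+1 => f i n) (Ordinal kn1)).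
Qed.

Lemma dominated_by_diagonal {T : Type} (d : nat -> T) (lab : T -> nat -> nat)
    (g : nat -> nat) (y : T) :
  range d y \/ (\forall n \near \oo, (lab y n <= g n)%N) ->
  le_star (lab y) (fun n => maxn (g n) (\max_(k < n.+1) lab (d k) n)%N).
Proof.
move=> [[k _ <-]|lab_g].
  apply: filterS (le_star_bigmax (fun k => lab (d k)) k) => n /leq_trans.
  by apply; exact: leq_maxr.
by apply: filterS lab_g => n /leq_trans; apply; exact: leq_maxl.
Qed.

Lemma closed_discrete_subset_closed {X : topologicalType} {Y S : set X} :
  closed_discrete Y -> S `<=` Y -> closed S.
Proof.
move=> [clY isoY] SY; rewrite -openC openE => z nSz.
have [Yz|nYz] := pselect (Y z).
  have [W [oW [Wz WY]]] := isoY z Yz.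
  apply: filterS (open_nbhs_nbhs (conj oW Wz)) => u Wu Su.
  have : (W `&` Y) u by split => //; exact: SY.
  by rewrite WY => /= uz; apply: nSz; rewrite -uz.
apply: filterS (open_nbhs_nbhs (conj (closed_openC clY) nYz)) => u nYu Su.
exact/nYu/SY.
Qed.

Lemma closed_discrete_isolating {X : topologicalType} {Y : set X} :
  closed_discrete Y -> exists W : X -> set X,
    forall y, Y y -> open (W y) /\ W y y /\ W y `&` Y = [set y].
Proof.
move=> [_ isoY]; have /choice [W HW] : forall y, exists W : set X,
    Y y -> open W /\ W y /\ W `&` Y = [set y].
  move=> y; have [Yy|nYy] := pselect (Y y); last by exists set0.
  by have [W ?] := isoY y Yy; exists W.
by exists W.
Qed.

(* In a regular space every point x has an open neighbourhood whose closure
   meets the closed discrete set Y at most in x: apply regularity to the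
   open neighbourhood X \ (Y \ {x}) of x. *)
Lemma regular_closed_discrete_nbhd {X : topologicalType} {Y : set X} (x : X) :
  regular_space X -> closed_discrete Y -> exists B : set X,
    open B /\ B x /\ forall y, Y y -> closure B y -> y = x.
Proof.
move=> reg cdY.
have open_compl : open (~` (Y `\ x)).
  by apply: closed_openC; apply: closed_discrete_subset_closed cdY _ => ? [].
have : nbhs x (~` (Y `\ x)) by apply: open_nbhs_nbhs; split => // -[_]; apply.
move=> /reg [A]; rewrite nbhsE => -[B [oB Bx] BA] clAG.
exists B; split => //; split => // y Yy /(closureS BA)/clAG.
by move=> nYy; apply: contrapT => yx; apply: nYy.
Qed.

Lemma regular_closed_discrete_separating {X : topologicalType} {Y : set X} :
  regular_space X -> closed_discrete Y -> exists N : X -> set X,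
    forall x, open (N x) /\ N x x /\ forall y, Y y -> closure (N x) y -> y = x.
Proof.
move=> reg cdY.
have /choice [N HN] := fun x => regular_closed_discrete_nbhd x reg cdY.
by exists N.
Qed.

Section star_cover.
Context {X : topologicalType} (Y : set X) (W N : X -> set X) (d : nat -> X)
  (lab : X -> nat -> nat).
Hypothesis closedY : closed Y.
Hypothesis W_isolates : forall y, Y y ->
  open (W y) /\ W y y /\ W y `&` Y = [set y].
Hypothesis N_separates : forall x,
  open (N x) /\ N x x /\ forall y, Y y -> closure (N x) y -> y = x.

Definition shadow (y : X) (m : nat) : set X :=
  \bigcup_(k in [set k | (k <= m)%N /\ d k <> y]) closure (N (d k)).

Definition star_cover (n : nat) : set (set X) :=
  [set ~` Y] `|` [set W y `&` ~` shadow y (lab y n) | y in Y].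

Definition initial_union (m : nat) : set X :=
  \bigcup_(k in [set k | (k <= m)%N]) N (d k).

Lemma closed_shadow y m : closed (shadow y m).
Proof.
apply: closed_bigcup => [|k _]; last exact: closed_closure.
by apply: sub_finite_set (finite_II m.+1) => k [km _] /=; rewrite ltnS.
Qed.

Lemma shadow_avoids y m : Y y -> ~ shadow y m y.
Proof.
move=> Yy [k [_ dky]] clNy; apply: dky.
by have [_ [_ sepN]] := N_separates (d k); rewrite (sepN y Yy clNy).
Qed.

Lemma star_cover_open_cover n : open_cover (star_cover n).
Proof.
split.
  move=> B [->|[y Yy <-]]; first exact: closed_openC.
  have [oW _] := W_isolates _ Yy.
  exact/openI/closed_openC/closed_shadow.
apply/seteqP; split => // z _; have [Yz|nYz] := pselect (Y z).
  exists (W z `&` ~` shadow z (lab z n)); first by right; exists z.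
  by have [_ [Wz _]] := W_isolates _ Yz; split => //; exact: shadow_avoids.
by exists (~` Y) => //; left.
Qed.

Lemma open_initial_union m : open (initial_union m).
Proof. by apply: bigcup_open => k _; have [] := N_separates (d k). Qed.

(* The key estimate: the only member of star_cover n containing y in Y is the
   one indexed by y, and it misses the neighbourhoods N (d k) for k up to
   lab y n with d k <> y; so if y is not some d k and its star meets
   initial_union m, then lab y n <= m. *)
Lemma star_initial_union_bound y n m : Y y -> ~ range d y ->
  St (initial_union m) (star_cover n) y -> (lab y n <= m)%N.
Proof.
move=> Yy nDy [B [[->|[y' Yy' <-]] [z [Bz [k km Nz]]]] By]; first by case: By.
have y'y : y' = y.
  have [_ [_ WY]] := W_isolates _ Yy'.
  by have : (W y' `&` Y) y := conj By.1 Yy; rewrite WY.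
subst y'.
case: Bz => _ nshz; rewrite leqNgt; apply/negP => mlt; apply: nshz.
exists k; last exact: subset_closure.
split => /=; first exact: leq_trans km (ltnW mlt).
by move=> dky; apply: nDy; exists k.
Qed.
End star_cover.

Theorem mainTheorem10 (X : topologicalType) :
  regular_space X -> separable X -> abs_nbhd_star_Hurewicz X ->
  forall Y : set X, closed_discrete Y -> card_lt_bounding Y.
Proof.
move=> reg [D [cD dD]] hurewicz Y cdY F unbF /pcard_surjP [lab labF].
have [f0 Ff0] := unbounded_family_nonempty unbF.
have [y0 Yy0 _] := labF f0 Ff0.
have [d rangeD] := countable_enum cD (dense_nonempty y0 dD).
have [W W_isolates] := closed_discrete_isolating cdY.
have [N N_separates] := regular_closed_discrete_separating reg cdY.
pose U := star_cover Y W N d lab.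
have U_covers : forall n, open_cover (U n).
  exact: star_cover_open_cover cdY.1 W_isolates N_separates.
have [S [finS hurS]] := hurewicz U D U_covers dD.
have /choice [g Sg] : forall n, exists m, S n `<=` d @` [set k | (k <= m)%N].
  move=> n; have [finSn SD] := finS n.
  by apply: finite_range_bounded; rewrite ?rangeD.
have starY : forall x,
    \forall n \near \oo, St (initial_union N d (g n)) (U n) x.
  apply: hurS => n; split; first exact: (open_initial_union _ _ _ N_separates).
  by move=> x /Sg [k kg <-]; exists k => //; have [_ []] := N_separates (d k).
apply: unbF; exists (fun n => maxn (g n) (\max_(k < n.+1) lab (d k) n)%N).
move=> _ /labF [y Yy <-]; apply: (dominated_by_diagonal d lab g y).
have [Dy|nDy] := pselect (range d y); [by left | right].
apply: filterS (starY y) => n.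
exact: star_initial_union_bound W_isolates _ _ _ Yy nDy.
Qed.
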